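(* Let $\mathcal{B}$ be a bicategory and let $\mathcal{N}\mathcal{B}\colon(\Theta^2)^{\mathrm{op}}\to\mathbf{Set}$ be its nerve. Then $\mathcal{N}\mathcal{B}$ satisfies the Segal condition, so it is a Tamsamani–Simpson weak $2$-category: (i) for every $k\ge0$ the Segal map $S_k\colon\mathcal{N}\mathcal{B}(k,-)\to\mathcal{N}\mathcal{B}(1,-)\times_{\mathcal{N}\mathcal{B}(0,0)}\cdots\times_{\mathcal{N}\mathcal{B}(0,0)}\mathcal{N}\mathcal{B}(1,-)$ ($k$ factors) is contractible; and (ii) for all $j,k\ge0$ the Segal map $S_{j,k}\colon\mathcal{N}\mathcal{B}(j,k)\to\mathcal{N}\mathcal{B}(j,1)\times_{\mathcal{N}\mathcal{B}(j,0)}\cdots\times_{\mathcal{N}\mathcal{B}(j,0)}\mathcal{N}\mathcal{B}(j,1)$ ($k$ factors) is a bijection.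
   Context: $\Delta$ is the category of finite ordinals $[k]=\{0,\dots,k\}$ and order-preserving maps. $\Theta^2$ is the quotient of $\Delta\times\Delta$ obtained by identifying all objects $([0],[k])$, $k\ge0$, into one object (represented by $(0,0)$) and identifying morphisms $(\phi,\psi)$ and $(\phi,\psi')$ whenever $\phi$ factors through $[0]$; write objects as $(j,k)$. Let $\sigma,\tau\colon[0]\to[1]$ pick $0$ and $1$, and $\iota_i\colon[1]\to[k]$ ($1\le i\le k$) send $0\mapsto i-1$, $1\mapsto i$. Nerve of a bicategory $\mathcal{B}$ (composition $\circ$ of $1$-cells, horizontal $*$ and vertical $\cdot$ composition of $2$-cells, associator $s$, left/right unitors $l,r$): $\mathcal{N}\mathcal{B}(j,k)$ is the set of quadruples $\big((a_u)_{0\le u\le j},(f^z_{uv})_{0\le u<v\le j,\,0\le z\le k},(\alpha^z_{uv})_{0\le u<v\le j,\,1\le z\le k},(\iota^z_{uvw})_{0\le u<v<w\le j,\,0\le z\le k}\big)$ with $a_u$ objects, $f^z_{uv}\colon a_u\to a_v$ $1$-cells, $\alpha^z_{uv}\colon f^{z-1}_{uv}\Rightarrow f^z_{uv}$ $2$-cells, $\iota^z_{uvw}\colon f^z_{vw}\circ f^z_{uv}\Rightarrow f^z_{uw}$ invertible $2$-cells, satisfying (A1) $\iota^z_{uvw}\cdot(\alpha^z_{vw}*\alpha^z_{uv})=\alpha^z_{uw}\cdot\iota^{z-1}_{uvw}$ and (A2) $\iota^z_{uwx}\cdot(1*\iota^z_{uvw})\cdot s=\iota^z_{uvx}\cdot(\iota^z_{vwx}*1)$,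 with $s\colon(f^z_{wx}\circ f^z_{vw})\circ f^z_{uv}\Rightarrow f^z_{wx}\circ(f^z_{vw}\circ f^z_{uv})$ the associator. (For $j=0$ this is just an object $a_0$, consistent with the identification in $\Theta^2$.) For $(p,q)\colon(l,m)\to(j,k)$, $\mathcal{N}\mathcal{B}(p,q)$ sends such a quadruple to $\big((b_u),(g^z_{uv}),(\beta^z_{uv}),(\kappa^z_{uvw})\big)$ with $b_u=a_{p(u)}$; $g^z_{uv}=f^{q(z)}_{p(u)p(v)}$ if $p(u)\ne p(v)$ and $1_{a_{p(u)}}$ otherwise; $\beta^z_{uv}$ the vertical composite $\alpha^{q(z)}_{p(u)p(v)}\cdot\ldots\cdot\alpha^{q(z-1)+1}_{p(u)p(v)}$ if $p(u)\ne p(v)$ (an identity if $q(z-1)=q(z)$), and $1_{1_{a_{p(u)}}}$ if $p(u)=p(v)$; $\kappa^z_{uvw}$ equal to $\iota^{q(z)}_{p(u)p(v)p(w)}$ if $p(u),p(v),p(w)$ are distinct, to the unitor $1\circ g^z_{uv}\Rightarrow g^z_{uv}$ if $p(u)\ne p(v)=p(w)$, to the unitor $g^z_{vw}\circ1\Rightarrow g^z_{vw}$ if $p(u)=p(v)\ne p(w)$, and to $1_{1_{a_{p(u)}}}$ (modulo the unitor $1\circ1\cong1$) if all equal. Segal maps: for a presheaf $A$ on $\Theta^2$, $A(k,-)$ is a simplicial set (functor $\Delta^{\mathrm{op}}\to\mathbf{Set}$) and $A(0,-)$ is constant at $A(0,0)$. $S_k$ is the map of simplicial sets into the wide pullback of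 $k$ copies of $A(1,-)$ along $t=A(\tau,\mathrm{id})$ and $s=A(\sigma,\mathrm{id})$, with components $A(\iota_i,\mathrm{id})$. $S_{j,k}$ is the map into the wide pullback of $k$ copies of $A(j,1)$ along $t=A(\mathrm{id},\tau)$ and $s=A(\mathrm{id},\sigma)$ over $A(j,0)$, with components $A(\mathrm{id},\iota_i)$. A map $\alpha\colon A\to B$ of simplicial sets, with source/target maps $s=A(\sigma),t=A(\tau)\colon A_1\to A_0$, is contractible if $\alpha_0\colon A_0\to B_0$ is surjective and the induced map $A_1\to A_0\times_{B_0}B_1\times_{B_0}A_0$, $x\mapsto(s x,\alpha_1x,t x)$, is a bijection (i.e. $\alpha$ is surjective on $0$-cells and full and faithful on $1$-cells). A Tamsamani–Simpson weak $2$-category is a presheaf on $\Theta^2$ satisfying (i) and (ii) (the Segal condition). *)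

From mathcomp Require Import ssreflect ssrfun ssrbool eqtype ssrnat seq fintype.

Set Implicit Arguments.
Unset Strict Implicit.
Unset Printing Implicit Defensive.

(* Bicategories (2-cells form sets; equality of 2-cells is Leibniz equality) *)

Record bicat_data := BicatData {
  Obj : Type;
  hom : Obj -> Obj -> Type;
  cell : forall a b : Obj, hom a b -> hom a b -> Type;
  id1 : forall a : Obj, hom a a;
  comp1 : forall a b c : Obj, hom b c -> hom a b -> hom a c;
  id2 : forall (a b : Obj) (f : hom a b), cell f f;
  vcomp : forall (a b : Obj) (f g h : hom a b),
      cell g h -> cell f g -> cell f h;
  hcomp : forall (a b c : Obj) (f f' : hom a b) (g g' : hom b c),
      cell g g' -> cell f f' -> cell (comp1 g f) (comp1 g' f');
  assoc : forall (a b c d : Obj) (f : hom a b) (g : hom b c) (h : hom c d),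
      cell (comp1 (comp1 h g) f) (comp1 h (comp1 g f));
  lunit : forall (a b : Obj) (f : hom a b), cell (comp1 (id1 b) f) f;
  runit : forall (a b : Obj) (f : hom a b), cell (comp1 f (id1 a)) f
}.

Arguments hom {_}.
Arguments cell {_ a b}.
Arguments id1 {_}.
Arguments comp1 {_ a b c}.
Arguments id2 {_ a b}.
Arguments vcomp {_ a b f g h}.
Arguments hcomp {_ a b c f f' g g'}.
Arguments assoc {_ a b c d}.
Arguments lunit {_ a b}.
Arguments runit {_ a b}.

Definition invertible2 (B : bicat_data) (a b : Obj B) (f g : hom a b)
  (al : cell f g) : Prop :=
  exists be : cell g f, vcomp be al = id2 f /\ vcomp al be = id2 g.

Definition bicat_axioms (B : bicat_data) : Prop :=
  (forall (a b : Obj B) (f g h i : hom a b)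
          (al : cell f g) (be : cell g h) (ga : cell h i),
      vcomp ga (vcomp be al) = vcomp (vcomp ga be) al) /\
  (forall (a b : Obj B) (f g : hom a b) (al : cell f g),
      vcomp (id2 g) al = al /\ vcomp al (id2 f) = al) /\
  (forall (a b c : Obj B) (f : hom a b) (g : hom b c),
      hcomp (id2 g) (id2 f) = id2 (comp1 g f)) /\
  (forall (a b c : Obj B) (f f' f'' : hom a b) (g g' g'' : hom b c)
          (al : cell f f') (al' : cell f' f'') (be : cell g g') (be' : cell g' g''),
      hcomp (vcomp be' be) (vcomp al' al) = vcomp (hcomp be' al') (hcomp be al)) /\
  (forall (a b c d : Obj B) (f : hom a b) (g : hom b c) (h : hom c d),
      invertible2 (assoc f g h)) /\
  (forall (a b : Obj B) (f : hom a b), invertible2 (lunit f)) /\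
  (forall (a b : Obj B) (f : hom a b), invertible2 (runit f)) /\
  (forall (a b c d : Obj B) (f f' : hom a b) (g g' : hom b c) (h h' : hom c d)
          (al : cell f f') (be : cell g g') (ga : cell h h'),
      vcomp (assoc f' g' h') (hcomp (hcomp ga be) al)
      = vcomp (hcomp ga (hcomp be al)) (assoc f g h)) /\
  (forall (a b : Obj B) (f f' : hom a b) (al : cell f f'),
      vcomp (lunit f') (hcomp (id2 (id1 b)) al) = vcomp al (lunit f)) /\
  (forall (a b : Obj B) (f f' : hom a b) (al : cell f f'),
      vcomp (runit f') (hcomp al (id2 (id1 a))) = vcomp al (runit f)) /\
  (forall (a b c d e : Obj B) (f : hom a b) (g : hom b c) (h : hom c d) (k : hom d e),
      vcomp (assoc (comp1 g f) h k) (assoc f g (comp1 k h))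
      = vcomp (hcomp (id2 k) (assoc f g h))
          (vcomp (assoc f (comp1 h g) k) (hcomp (assoc g h k) (id2 f)))) /\
  (forall (a b c : Obj B) (f : hom a b) (g : hom b c),
      vcomp (hcomp (id2 g) (lunit f)) (assoc f (id1 b) g)
      = hcomp (runit g) (id2 f)).

Record bicategory := Bicategory {
  bicat_of :> bicat_data;
  bicat_ax : bicat_axioms bicat_of
}.

(* For z : 'I_k (standing for the index z+1 in {1..k}):
   zprev z = z (i.e. (z+1)-1) and znext z = z+1, both in 'I_k.+1 = [k]. *)
Definition zprev (k : nat) (z : 'I_k) : 'I_k.+1 := widen_ord (leqnSn k) z.
Definition znext (k : nat) (z : 'I_k) : 'I_k.+1 := lift ord0 z.

(* Raw quadruples ((a_u),(f^z_uv),(alpha^z_uv),(iota^z_uvw)) for (j,k).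
   The order conditions u<v (<w) are carried as (boolean, hence
   proof-irrelevant) hypotheses. *)
Record nerve_raw (B : bicat_data) (j k : nat) := NerveRaw {
  nob : 'I_j.+1 -> Obj B;
  n1 : forall (u v : 'I_j.+1), u < v -> 'I_k.+1 -> hom (nob u) (nob v);
  n2 : forall (u v : 'I_j.+1) (huv : u < v) (z : 'I_k),
      cell (n1 huv (zprev z)) (n1 huv (znext z));
  n3 : forall (u v w : 'I_j.+1) (huv : u < v) (hvw : v < w) (huw : u < w)
              (z : 'I_k.+1),
      cell (comp1 (n1 hvw z) (n1 huv z)) (n1 huw z)
}.

Arguments nob {B j k}.
Arguments n1 {B j k} _ {u v}.
Arguments n2 {B j k} _ {u v}.
Arguments n3 {B j k} _ {u v w}.

(* Membership in NB(j,k): invertibility of the iota's, (A1) and (A2). *)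
Definition is_nerve (B : bicat_data) (j k : nat) (x : nerve_raw B j k) : Prop :=
  (forall (u v w : 'I_j.+1) (huv : u < v) (hvw : v < w) (huw : u < w) (z : 'I_k.+1),
      invertible2 (n3 x huv hvw huw z)) /\
  (forall (u v w : 'I_j.+1) (huv : u < v) (hvw : v < w) (huw : u < w) (z : 'I_k),
      vcomp (n3 x huv hvw huw (znext z)) (hcomp (n2 x hvw z) (n2 x huv z))
      = vcomp (n2 x huw z) (n3 x huv hvw huw (zprev z))) /\
  (forall (u v w y : 'I_j.+1) (huv : u < v) (hvw : v < w) (hwy : w < y)
          (huw : u < w) (hvy : v < y) (huy : u < y) (z : 'I_k.+1),
      vcomp (n3 x huw hwy huy z)
            (vcomp (hcomp (id2 (n1 x hwy z)) (n3 x huv hvw huw z))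
                   (assoc (n1 x huv z) (n1 x hvw z) (n1 x hwy z)))
      = vcomp (n3 x huv hvy huy z)
              (hcomp (n3 x hvw hwy hvy z) (id2 (n1 x huv z)))).

(* --- NB(id, q) for q : [0] -> [k] picking the vertex c --- *)
Definition nerve_pt (B : bicat_data) (j k : nat) (c : 'I_k.+1)
  (x : nerve_raw B j k) : nerve_raw B j 0 :=
  @NerveRaw B j 0 (nob x)
    (fun u v huv _ => n1 x huv c)
    (fun u v huv (z : 'I_0) => match z with Ordinal n hn =>
        False_rect _ (notF (hn : n < 0)) end)
    (fun u v w huv hvw huw _ => n3 x huv hvw huw c).

(* iota_i : [1] -> [k], 0 |-> i-1, 1 |-> i   (i : 'I_k stands for i+1) *)
Definition iota_map (k : nat) (i : 'I_k) (z : 'I_2) : 'I_k.+1 :=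
  match nat_of_ord z with 0 => zprev i | _ => znext i end.

(* --- NB(id, iota_i) : NB(j,k) -> NB(j,1) --- *)
Definition nerve_edge (B : bicat_data) (j k : nat) (i : 'I_k)
  (x : nerve_raw B j k) : nerve_raw B j 1 :=
  @NerveRaw B j 1 (nob x)
    (fun u v huv z => n1 x huv (iota_map i z))
    (fun u v huv (z : 'I_1) =>
       match z as z0 return cell (n1 x huv (iota_map i (zprev z0)))
                                 (n1 x huv (iota_map i (znext z0))) with
       | Ordinal n hn =>
         match n as n0 return forall hn0 : n0 < 1,
             cell (n1 x huv (iota_map i (zprev (Ordinal hn0))))
                  (n1 x huv (iota_map i (znext (Ordinal hn0)))) with
         | 0 => fun _ => n2 x huv i
         | n'.+1 => fun hn0 => False_rect _ (notF (hn0 : n'.+1 < 1))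
         end hn
       end)
    (fun u v w huv hvw huw z => n3 x huv hvw huw (iota_map i z)).

Lemma iota_map_mono (k : nat) (i : 'I_k) (u v : 'I_2) :
  u < v -> iota_map i u < iota_map i v.
Proof.
by case: u v => [[|[|u]] hu] [[|[|v]] hv].
Qed.

Lemma no_triple2 (u v w : 'I_2) : u < v -> v < w -> False.
Proof. by case: u v w => [[|[|u]] ?] [[|[|v]] ?] [[|[|w]] ?]. Qed.

(* --- NB(iota_i, id) : NB(k,m) -> NB(1,m) --- *)
Definition nerve_face (B : bicat_data) (k m : nat) (i : 'I_k)
  (x : nerve_raw B k m) : nerve_raw B 1 m :=
  @NerveRaw B 1 m (fun u => nob x (iota_map i u))
    (fun u v huv z => n1 x (iota_map_mono i huv) z)
    (fun u v huv z => n2 x (iota_map_mono i huv) z)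
    (fun u v w huv hvw huw z => False_rect _ (no_triple2 huv hvw)).

(* An element is a chain of k composable edges; its k+1 vertices are        *)
(* recorded too, so that for k = 0 the pullback is V itself.                 *)

Record chain (V E : Type) (k : nat) := Chain {
  cvert : 'I_k.+1 -> V;
  cedge : 'I_k -> E
}.

Arguments cvert {V E k}.
Arguments cedge {V E k}.

Definition in_pullback (V E : Type) (k : nat) (NV : V -> Prop) (NE : E -> Prop)
  (s t : E -> V) (c : chain V E k) : Prop :=
  (forall v, NV (cvert c v)) /\
  (forall i : 'I_k, NE (cedge c i) /\ s (cedge c i) = cvert c (zprev i)
                    /\ t (cedge c i) = cvert c (znext i)).

Definition bijective_on (A B : Type) (NA : A -> Prop) (NB : B -> Prop)
  (f : A -> B) : Prop :=
  (forall x, NA x -> NB (f x)) /\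
  (forall y, NB y -> exists! x, NA x /\ f x = y).

(* A map alpha : A -> B of simplicial sets (only degrees 0,1 matter) is
   contractible: surjective on 0-cells, and A_1 -> A_0 x_{B_0} B_1 x_{B_0} A_0,
   x |-> (s x, alpha_1 x, t x) is a bijection. *)
Definition contractible (A0 A1 B0 B1 : Type)
  (NA0 : A0 -> Prop) (NA1 : A1 -> Prop) (NB0 : B0 -> Prop) (NB1 : B1 -> Prop)
  (sA tA : A1 -> A0) (sB tB : B1 -> B0) (al0 : A0 -> B0) (al1 : A1 -> B1) : Prop :=
  (forall x, NA0 x -> NB0 (al0 x)) /\
  (forall x, NA1 x -> NB1 (al1 x)) /\
  (forall y, NB0 y -> exists2 x, NA0 x & al0 x = y) /\
  (forall (x x' : A0) (y : B1), NA0 x -> NA0 x' -> NB1 y ->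
      al0 x = sB y -> al0 x' = tB y ->
      exists! x1 : A1, NA1 x1 /\ sA x1 = x /\ al1 x1 = y /\ tA x1 = x').

(* NB(0,0) is the set of objects; A(sigma,id), A(tau,id) : NB(1,m) -> NB(0,0) *)
Definition src_obj (B : bicat_data) (m : nat) (y : nerve_raw B 1 m) : Obj B :=
  nob y ord0.
Definition tgt_obj (B : bicat_data) (m : nat) (y : nerve_raw B 1 m) : Obj B :=
  nob y ord_max.

(* S_k in simplicial degree m : NB(k,m) -> NB(1,m) x_{NB(0,0)} ... *)
Definition segal1 (B : bicat_data) (k m : nat) (x : nerve_raw B k m)
  : chain (Obj B) (nerve_raw B 1 m) k :=
  Chain (fun v => nob x v) (fun i => nerve_face i x).

Definition segal1_target (B : bicat_data) (k m : nat)
  (c : chain (Obj B) (nerve_raw B 1 m) k) : Prop :=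
  in_pullback (fun _ => True) (@is_nerve B 1 m)
    (@src_obj B m) (@tgt_obj B m) c.

(* face maps s = A(id,sigma), t = A(id,tau) in the simplicial direction *)
Definition sface (B : bicat_data) (j : nat) (x : nerve_raw B j 1) :=
  nerve_pt ord0 x.
Definition tface (B : bicat_data) (j : nat) (x : nerve_raw B j 1) :=
  nerve_pt ord_max x.

Definition chain_map (V E E' : Type) (k : nat) (g : E -> E')
  (c : chain V E k) : chain V E' k := Chain (cvert c) (fun i => g (cedge c i)).

Definition segal_cond_i (B : bicat_data) (k : nat) : Prop :=
  contractible
    (@is_nerve B k 0) (@is_nerve B k 1)
    (@segal1_target B k 0) (@segal1_target B k 1)
    (@sface B k) (@tface B k)
    (chain_map (@sface B 1)) (chain_map (@tface B 1))
    (@segal1 B k 0) (@segal1 B k 1).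

Definition segal2 (B : bicat_data) (j k : nat) (x : nerve_raw B j k)
  : chain (nerve_raw B j 0) (nerve_raw B j 1) k :=
  Chain (fun v => nerve_pt v x) (fun i => nerve_edge i x).

Definition segal_cond_ii (B : bicat_data) (j k : nat) : Prop :=
  bijective_on (@is_nerve B j k)
    (in_pullback (@is_nerve B j 0) (@is_nerve B j 1) (@sface B j) (@tface B j))
    (@segal2 B j k).

(* Idea: a simplex of NB(j,k) carries exactly the data of its vertices in
   NB(j,0) (objects, 1-cells, iotas) and of its edges in NB(j,1) (the 2-cells
   alpha), which gives (ii).  For (i), a composable chain of 1-cells is the spine
   of the simplex whose 1-cells are left-nested composites and whose iotas are
   composites of associators; (A2) for it is the pentagon.  Given two simplices
   of NB(k,0) over the same spine objects and 2-cells between their spine edges,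
   (A1) together with the invertibility of the iotas determines all other
   2-cells, and (A2) for both simplices shows that the cells so defined satisfy
   (A1). *)

From mathcomp Require Import ssreflect ssrfun ssrbool eqtype ssrnat seq fintype.
From mathcomp Require Import zify.
From Stdlib Require Import FunctionalExtensionality ClassicalEpsilon Eqdep Lia.

Set Implicit Arguments.
Unset Strict Implicit.
Unset Printing Implicit Defensive.

Definition witness (T : Type) (P : T -> Prop) (H : exists x, P x) : T :=
  proj1_sig (constructive_indefinite_description P H).

Lemma witnessP (T : Type) (P : T -> Prop) (H : exists x, P x) : P (witness H).
Proof. exact: proj2_sig (constructive_indefinite_description P H). Qed.

(** * Cells with propositionally equal boundaries *)

(* 1-cells and 2-cells whose boundaries agree only propositionally are
   compared through their packages with the boundary, as with JMeq. *)
Definition pack1 (B : bicat_data) (a b : Obj B) (f : hom a b) :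
  {a : Obj B & {b : Obj B & hom a b}} := existT _ a (existT _ b f).

Definition pack2 (B : bicat_data) (a b : Obj B) (f g : hom a b) (c : cell f g) :
  {a : Obj B & {b : Obj B & {f : hom a b & {g : hom a b & cell f g}}}} :=
  existT _ a (existT _ b (existT _ f (existT _ g c))).

Ltac inj_pack H :=
  repeat match type of H with
  | existT _ ?a _ = existT _ ?a _ => apply inj_pair2 in H
  | existT _ ?a _ = existT _ ?b _ =>
      let E := fresh "E" in
      have E := f_equal (@projT1 _ _) H; simpl in E;
      first [subst b | subst a]
  end.

Section Packages.
Variable B : bicat_data.

Lemma pack1_inj (a b : Obj B) (f f' : hom a b) : pack1 f = pack1 f' -> f = f'.
Proof. by rewrite /pack1 => H; inj_pack H. Qed.

Lemma pack2_inj (a b : Obj B) (f g : hom a b) (c c' : cell f g) :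
  pack2 c = pack2 c' -> c = c'.
Proof. by rewrite /pack2 => H; inj_pack H. Qed.

Lemma pack1_comp1 (a b c : Obj B) (f : hom a b) (g : hom b c)
  a' b' c' (f' : hom a' b') (g' : hom b' c') :
  pack1 g = pack1 g' -> pack1 f = pack1 f' -> pack1 (comp1 g f) = pack1 (comp1 g' f').
Proof. by rewrite /pack1 => H1 H2; inj_pack H2; subst; inj_pack H1; subst. Qed.

Lemma pack2_id2 (a b : Obj B) (f : hom a b) a' b' (f' : hom a' b') :
  pack1 f = pack1 f' -> pack2 (id2 f) = pack2 (id2 f').
Proof. by rewrite /pack1 => H; inj_pack H; subst. Qed.

Lemma pack2_vcomp (a b : Obj B) (f g h : hom a b) (c1 : cell g h) (c2 : cell f g)
  a' b' (f' g' h' : hom a' b') (c1' : cell g' h') (c2' : cell f' g') :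
  pack2 c1 = pack2 c1' -> pack2 c2 = pack2 c2' ->
  pack2 (vcomp c1 c2) = pack2 (vcomp c1' c2').
Proof. by rewrite /pack2 => H1 H2; inj_pack H2; subst; inj_pack H1; subst. Qed.

Lemma pack2_hcomp (a b c : Obj B) (f f' : hom a b) (g g' : hom b c)
  (c1 : cell g g') (c2 : cell f f') a1 b1 c3 (f1 f1' : hom a1 b1) (g1 g1' : hom b1 c3)
  (c1' : cell g1 g1') (c2' : cell f1 f1') :
  pack2 c1 = pack2 c1' -> pack2 c2 = pack2 c2' ->
  pack2 (hcomp c1 c2) = pack2 (hcomp c1' c2').
Proof. by rewrite /pack2 => H1 H2; inj_pack H2; subst; inj_pack H1; subst. Qed.

Lemma pack2_assoc (a b c d : Obj B) (f : hom a b) (g : hom b c) (h : hom c d)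
  a' b' c' d' (f' : hom a' b') (g' : hom b' c') (h' : hom c' d') :
  pack1 f = pack1 f' -> pack1 g = pack1 g' -> pack1 h = pack1 h' ->
  pack2 (assoc f g h) = pack2 (assoc f' g' h').
Proof.
rewrite /pack1 => H1 H2 H3.
by inj_pack H1; subst; inj_pack H2; subst; inj_pack H3; subst.
Qed.

Lemma pack2_invertible (a b : Obj B) (f g : hom a b) (c : cell f g)
  a' b' (f' g' : hom a' b') (c' : cell f' g') :
  pack2 c = pack2 c' -> invertible2 c -> invertible2 c'.
Proof. by rewrite /pack2 => H; inj_pack H; subst. Qed.

Lemma pack2_eq (a b : Obj B) (f g : hom a b) (c c' : cell f g) :
  c = c' -> pack2 c = pack2 c'.
Proof. by move->. Qed.

Lemma transport_hom (a b : Obj B) (f : hom a b) a' b' :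
  a = a' -> b = b' -> exists f' : hom a' b', pack1 f' = pack1 f.
Proof. by move=> <- <-; exists f. Qed.

Lemma transport_cell (a b : Obj B) (f g : hom a b) (c : cell f g)
  a' b' (f' g' : hom a' b') :
  pack1 f = pack1 f' -> pack1 g = pack1 g' -> exists c' : cell f' g', pack2 c' = pack2 c.
Proof. by rewrite /pack1 => H1 H2; inj_pack H1; subst; inj_pack H2; subst; exists c. Qed.

Lemma nerve_raw_eq (j k : nat) (x x' : nerve_raw B j k) :
  (forall u, nob x u = nob x' u) ->
  (forall (u v : 'I_j.+1) (h : u < v) z, pack1 (n1 x h z) = pack1 (n1 x' h z)) ->
  (forall (u v : 'I_j.+1) (h : u < v) z, pack2 (n2 x h z) = pack2 (n2 x' h z)) ->
  (forall (u v w : 'I_j.+1) (h1 : u < v) (h2 : v < w) (h3 : u < w) z,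
      pack2 (n3 x h1 h2 h3 z) = pack2 (n3 x' h1 h2 h3 z)) ->
  x = x'.
Proof.
case: x => o f al io; case: x' => o' f' al' io' /= Eo Ef Eal Eio.
have E := functional_extensionality _ _ Eo; subst o'.
have E : f = f'.
  by do 4 apply: functional_extensionality_dep => ?; apply: pack1_inj; apply: Ef.
subst f'.
have E : al = al'.
  by do 4 apply: functional_extensionality_dep => ?; apply: pack2_inj; apply: Eal.
subst al'.
have E : io = io'.
  by do 7 apply: functional_extensionality_dep => ?; apply: pack2_inj; apply: Eio.
by subst io'.
Qed.

End Packages.

Section BicategoryFacts.
Variable B : bicategory.

Lemma vcompA (a b : Obj B) (f g h i : hom a b)
  (al : cell f g) (be : cell g h) (ga : cell h i) :
  vcomp ga (vcomp be al) = vcomp (vcomp ga be) al.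
Proof. by case: (bicat_ax B) => H _; apply: H. Qed.

Lemma vcomp_id2l (a b : Obj B) (f g : hom a b) (al : cell f g) : vcomp (id2 g) al = al.
Proof. by case: (bicat_ax B) => _ [H _]; case: (H _ _ _ _ al). Qed.

Lemma vcomp_id2r (a b : Obj B) (f g : hom a b) (al : cell f g) : vcomp al (id2 f) = al.
Proof. by case: (bicat_ax B) => _ [H _]; case: (H _ _ _ _ al). Qed.

Lemma hcomp_id2 (a b c : Obj B) (f : hom a b) (g : hom b c) :
  hcomp (id2 g) (id2 f) = id2 (comp1 g f).
Proof. by case: (bicat_ax B) => _ [_ [H _]]. Qed.

Lemma interchange (a b c : Obj B) (f f' f'' : hom a b) (g g' g'' : hom b c)
  (al : cell f f') (al' : cell f' f'') (be : cell g g') (be' : cell g' g'') :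
  hcomp (vcomp be' be) (vcomp al' al) = vcomp (hcomp be' al') (hcomp be al).
Proof. by case: (bicat_ax B) => _ [_ [_ [H _]]]. Qed.

Lemma assoc_invertible (a b c d : Obj B) (f : hom a b) (g : hom b c) (h : hom c d) :
  invertible2 (assoc f g h).
Proof. by case: (bicat_ax B) => _ [_ [_ [_ [H _]]]]. Qed.

Lemma assoc_nat (a b c d : Obj B) (f f' : hom a b) (g g' : hom b c) (h h' : hom c d)
  (al : cell f f') (be : cell g g') (ga : cell h h') :
  vcomp (assoc f' g' h') (hcomp (hcomp ga be) al)
  = vcomp (hcomp ga (hcomp be al)) (assoc f g h).
Proof. by case: (bicat_ax B) => _ [_ [_ [_ [_ [_ [_ [H _]]]]]]]. Qed.

Lemma pentagon (a b c d e : Obj B) (f : hom a b) (g : hom b c) (h : hom c d)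
  (k : hom d e) :
  vcomp (assoc (comp1 g f) h k) (assoc f g (comp1 k h))
  = vcomp (hcomp (id2 k) (assoc f g h))
      (vcomp (assoc f (comp1 h g) k) (hcomp (assoc g h k) (id2 f))).
Proof. by case: (bicat_ax B) => _ [_ [_ [_ [_ [_ [_ [_ [_ [_ [H _]]]]]]]]]]. Qed.

Lemma whiskerl_vcomp (a b c : Obj B) (f f' f'' : hom a b) (g : hom b c)
  (al : cell f f') (al' : cell f' f'') :
  hcomp (id2 g) (vcomp al' al) = vcomp (hcomp (id2 g) al') (hcomp (id2 g) al).
Proof. by rewrite -interchange vcomp_id2l. Qed.

Lemma whiskerr_vcomp (a b c : Obj B) (f : hom a b) (g g' g'' : hom b c)
  (be : cell g g') (be' : cell g' g'') :
  hcomp (vcomp be' be) (id2 f) = vcomp (hcomp be' (id2 f)) (hcomp be (id2 f)).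
Proof. by rewrite -interchange vcomp_id2l. Qed.

Lemma id2_invertible (a b : Obj B) (f : hom a b) : invertible2 (id2 f).
Proof. by exists (id2 f); rewrite vcomp_id2l. Qed.

Lemma vcomp_invertible (a b : Obj B) (f g h : hom a b) (c1 : cell g h) (c2 : cell f g) :
  invertible2 c1 -> invertible2 c2 -> invertible2 (vcomp c1 c2).
Proof.
move=> [d1 [e1 e1']] [d2 [e2 e2']]; exists (vcomp d2 d1); split.
  by rewrite vcompA -[vcomp (vcomp d2 d1) c1]vcompA e1 vcomp_id2r.
by rewrite vcompA -[vcomp (vcomp c1 c2) d2]vcompA e2' vcomp_id2r.
Qed.

Lemma hcomp_invertible (a b c : Obj B) (f f' : hom a b) (g g' : hom b c)
  (c1 : cell g g') (c2 : cell f f') :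
  invertible2 c1 -> invertible2 c2 -> invertible2 (hcomp c1 c2).
Proof.
move=> [d1 [e1 e1']] [d2 [e2 e2']]; exists (hcomp d1 d2).
by rewrite -!interchange e1 e2 e1' e2' !hcomp_id2.
Qed.

End BicategoryFacts.

Definition inv2 (B : bicat_data) (a b : Obj B) (f g : hom a b) (c : cell f g)
  (H : invertible2 c) : cell g f := witness H.

Lemma inv2_cancel_l (B : bicat_data) (a b : Obj B) (f g : hom a b) (c : cell f g)
  (H : invertible2 c) : vcomp (inv2 H) c = id2 f.
Proof. exact: (witnessP H).1. Qed.

Lemma inv2_cancel_r (B : bicat_data) (a b : Obj B) (f g : hom a b) (c : cell f g)
  (H : invertible2 c) : vcomp c (inv2 H) = id2 g.
Proof. exact: (witnessP H).2. Qed.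

(** * Condition (ii) *)

Lemma zprev_ord0 : zprev (ord0 : 'I_1) = (ord0 : 'I_2).
Proof. exact: val_inj. Qed.

Lemma znext_ord0 : znext (ord0 : 'I_1) = (ord_max : 'I_2).
Proof. exact: val_inj. Qed.

Section NerveFaces.
Variables (B : bicat_data) (j k : nat) (x : nerve_raw B j k).

Lemma is_nerve_pt (z : 'I_k.+1) : is_nerve x -> is_nerve (nerve_pt z x).
Proof.
move=> [Hinv [_ HA2]]; split; last split.
- by move=> *; apply: Hinv.
- by move=> u v w huv hvw huw; case.
- by move=> *; apply: HA2.
Qed.

Lemma is_nerve_edge (i : 'I_k) : is_nerve x -> is_nerve (nerve_edge i x).
Proof.
move=> [Hinv [HA1 HA2]]; split; last split.
- by move=> *; apply: Hinv.
- by move=> u v w huv hvw huw [[|n] hz] //=; apply: HA1.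
- by move=> *; apply: HA2.
Qed.

Lemma sface_edge (i : 'I_k) : sface (nerve_edge i x) = nerve_pt (zprev i) x.
Proof. by apply: nerve_raw_eq => //= u v h; case. Qed.

Lemma tface_edge (i : 'I_k) : tface (nerve_edge i x) = nerve_pt (znext i) x.
Proof. by apply: nerve_raw_eq => //= u v h; case. Qed.

End NerveFaces.

Lemma segal2_inj (B : bicat_data) (j k : nat) (x x' : nerve_raw B j k) :
  segal2 x = segal2 x' -> x = x'.
Proof.
move=> E.
have Ev z : nerve_pt z x = nerve_pt z x' by exact: (congr1 (cvert^~ z) E).
have Ee i : nerve_edge i x = nerve_edge i x' by exact: (congr1 (cedge^~ i) E).
apply: nerve_raw_eq.
- by move=> u; exact: (congr1 (nob^~ u) (Ev ord0)).
- by move=> u v h z; exact: (congr1 (fun y => pack1 (n1 y h ord0)) (Ev z)).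
- by move=> u v h i; exact: (congr1 (fun y => pack2 (n2 y h ord0)) (Ee i)).
- by move=> u v w h1 h2 h3 z; exact: (congr1 (fun y => pack2 (n3 y h1 h2 h3 ord0)) (Ev z)).
Qed.

(* The objects of the vertices V z agree only propositionally, so all data is
   transported to the objects of V ord0. *)
Section Assemble.
Variables (B : bicat_data) (j k : nat).
Variables (V : 'I_k.+1 -> nerve_raw B j 0) (E : 'I_k -> nerve_raw B j 1).
Hypothesis sface_E : forall i, sface (E i) = V (zprev i).
Hypothesis tface_E : forall i, tface (E i) = V (znext i).

Let a := nob (V ord0).

Lemma nob_chain (z : 'I_k.+1) : nob (V z) = a.
Proof.
case: z => n; elim: n => [|n IH] hn; first by congr (nob (V _)); apply: val_inj.
have hk : n < k := hn.
have -> : Ordinal hn = znext (Ordinal hk) by apply: val_inj.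
rewrite -tface_E -(IH (ltnW hn)).
have -> : Ordinal (ltnW hn) = zprev (Ordinal hk) by apply: val_inj.
by rewrite -sface_E.
Qed.

Lemma nob_E (i : 'I_k) : nob (E i) = a.
Proof. by rewrite -(nob_chain (zprev i)) -sface_E. Qed.

Lemma chain1_ex (u v : 'I_j.+1) (h : u < v) (z : 'I_k.+1) :
  exists f : hom (a u) (a v), pack1 f = pack1 (n1 (V z) h ord0).
Proof. by apply: transport_hom; rewrite nob_chain. Qed.

Definition chain1 (u v : 'I_j.+1) (h : u < v) (z : 'I_k.+1) : hom (a u) (a v) :=
  witness (chain1_ex h z).

Lemma chain1P (u v : 'I_j.+1) (h : u < v) z : pack1 (chain1 h z) = pack1 (n1 (V z) h ord0).
Proof. exact: (witnessP (chain1_ex h z)). Qed.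

Lemma chain1_sface i (u v : 'I_j.+1) (h : u < v) :
  pack1 (n1 (E i) h ord0) = pack1 (chain1 h (zprev i)).
Proof. by rewrite chain1P -sface_E. Qed.

Lemma chain1_tface i (u v : 'I_j.+1) (h : u < v) :
  pack1 (n1 (E i) h ord_max) = pack1 (chain1 h (znext i)).
Proof. by rewrite chain1P -tface_E. Qed.

Lemma chain2_ex (u v : 'I_j.+1) (h : u < v) (i : 'I_k) :
  exists c : cell (chain1 h (zprev i)) (chain1 h (znext i)),
    pack2 c = pack2 (n2 (E i) h ord0).
Proof.
apply: transport_cell; first by rewrite zprev_ord0 chain1_sface.
by rewrite znext_ord0 chain1_tface.
Qed.

Definition chain2 (u v : 'I_j.+1) (h : u < v) (i : 'I_k) :
  cell (chain1 h (zprev i)) (chain1 h (znext i)) := witness (chain2_ex h i).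

Lemma chain2P (u v : 'I_j.+1) (h : u < v) i : pack2 (chain2 h i) = pack2 (n2 (E i) h ord0).
Proof. exact: (witnessP (chain2_ex h i)). Qed.

Lemma chain3_ex (u v w : 'I_j.+1) (h1 : u < v) (h2 : v < w) (h3 : u < w) (z : 'I_k.+1) :
  exists c : cell (comp1 (chain1 h2 z) (chain1 h1 z)) (chain1 h3 z),
    pack2 c = pack2 (n3 (V z) h1 h2 h3 ord0).
Proof. by apply: transport_cell; rewrite ?chain1P //; apply: pack1_comp1; rewrite chain1P. Qed.

Definition chain3 (u v w : 'I_j.+1) (h1 : u < v) (h2 : v < w) (h3 : u < w) (z : 'I_k.+1) :
  cell (comp1 (chain1 h2 z) (chain1 h1 z)) (chain1 h3 z) := witness (chain3_ex h1 h2 h3 z).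

Lemma chain3P (u v w : 'I_j.+1) (h1 : u < v) (h2 : v < w) (h3 : u < w) z :
  pack2 (chain3 h1 h2 h3 z) = pack2 (n3 (V z) h1 h2 h3 ord0).
Proof. exact: (witnessP (chain3_ex h1 h2 h3 z)). Qed.

Lemma chain3_sface i (u v w : 'I_j.+1) (h1 : u < v) (h2 : v < w) (h3 : u < w) :
  pack2 (n3 (E i) h1 h2 h3 ord0) = pack2 (chain3 h1 h2 h3 (zprev i)).
Proof. by rewrite chain3P -sface_E. Qed.

Lemma chain3_tface i (u v w : 'I_j.+1) (h1 : u < v) (h2 : v < w) (h3 : u < w) :
  pack2 (n3 (E i) h1 h2 h3 ord_max) = pack2 (chain3 h1 h2 h3 (znext i)).
Proof. by rewrite chain3P -tface_E. Qed.

Definition chain_nerve : nerve_raw B j k := NerveRaw chain2 chain3.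

Lemma segal2_chain_nerve : segal2 chain_nerve = Chain V E.
Proof.
congr Chain; apply: functional_extensionality => t; apply: nerve_raw_eq => /=.
- by move=> u; rewrite nob_chain.
- by move=> u v h z; rewrite (ord1 z) chain1P.
- by move=> u v h; case.
- by move=> u v w h1 h2 h3 z; rewrite (ord1 z) chain3P.
- by move=> u; rewrite nob_E.
- move=> u v h [[|[|n]] hz] //.
    by rewrite (_ : Ordinal hz = ord0) ?chain1_sface //; apply: val_inj.
  by rewrite (_ : Ordinal hz = ord_max) ?chain1_tface //; apply: val_inj.
- move=> u v h [[|n] hz] //=; apply: etrans (chain2P _ _) _.
  by rewrite (_ : Ordinal hz = ord0) //; apply: val_inj.
- move=> u v w h1 h2 h3 [[|[|n]] hz] //.
    by rewrite (_ : Ordinal hz = ord0) ?chain3_sface //; apply: val_inj.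
  by rewrite (_ : Ordinal hz = ord_max) ?chain3_tface //; apply: val_inj.
Qed.

Lemma is_nerve_chain_nerve :
  (forall z, is_nerve (V z)) -> (forall i, is_nerve (E i)) -> is_nerve chain_nerve.
Proof.
move=> HV HE; split; last split.
- move=> u v w h1 h2 h3 z /=; apply: (pack2_invertible (esym (chain3P _ _ _ _))).
  by case: (HV z) => Hinv _; apply: Hinv.
- move=> u v w h1 h2 h3 i /=; apply: pack2_inj.
  have [_ [HA1 _]] := HE i.
  apply: etrans (etrans _ (pack2_eq (HA1 u v w h1 h2 h3 ord0))) _.
    apply: pack2_vcomp; last apply: pack2_hcomp; rewrite ?chain2P //.
    by rewrite znext_ord0 chain3_tface.
  by apply: pack2_vcomp; rewrite ?chain2P // zprev_ord0 chain3_sface.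
- move=> u v w y h1 h2 h3 h4 h5 h6 z /=; apply: pack2_inj.
  have [_ [_ HA2]] := HV z.
  apply: etrans (etrans _ (pack2_eq (HA2 u v w y h1 h2 h3 h4 h5 h6 ord0))) _.
    apply: pack2_vcomp; first by rewrite chain3P.
    apply: pack2_vcomp; last by apply: pack2_assoc; rewrite chain1P.
    by apply: pack2_hcomp; [apply: pack2_id2; rewrite chain1P | rewrite chain3P].
  apply: pack2_vcomp; first by rewrite chain3P.
  by apply: pack2_hcomp; [rewrite chain3P | apply: pack2_id2; rewrite chain1P].
Qed.

End Assemble.

Lemma segal_cond_ii_holds (B : bicat_data) (j k : nat) : segal_cond_ii B j k.
Proof.
split=> [x Hx | [V E] [HV HE]].
  split=> [z|i]; first exact: is_nerve_pt.
  by rewrite /= sface_edge tface_edge; split; first exact: is_nerve_edge.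
have sface_E i : sface (E i) = V (zprev i) by case: (HE i) => _ [].
have tface_E i : tface (E i) = V (znext i) by case: (HE i) => _ [].
exists (chain_nerve sface_E tface_E); split.
  split; last exact: segal2_chain_nerve.
  by apply: is_nerve_chain_nerve => // i; case: (HE i).
by move=> x [_ Hx]; apply: segal2_inj; rewrite Hx segal2_chain_nerve.
Qed.

(** * Condition (i): surjectivity on objects *)

Lemma A2_append (B : bicategory) (a b c d e : Obj B) (f : hom a b) (g : hom b c)
  (h : hom c d) (k : hom d e) (Fuw : hom a c) (Fvy : hom b d) (Fuy : hom a d)
  (Iuvw : cell (comp1 g f) Fuw) (Ivwy : cell (comp1 h g) Fvy)
  (Iuwy : cell (comp1 h Fuw) Fuy) (Iuvy : cell (comp1 Fvy f) Fuy) :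
  vcomp Iuwy (vcomp (hcomp (id2 h) Iuvw) (assoc f g h))
    = vcomp Iuvy (hcomp Ivwy (id2 f)) ->
  vcomp (vcomp (hcomp (id2 k) Iuwy) (assoc Fuw h k))
        (vcomp (hcomp (id2 (comp1 k h)) Iuvw) (assoc f g (comp1 k h)))
  = vcomp (vcomp (hcomp (id2 k) Iuvy) (assoc f Fvy k))
          (hcomp (vcomp (hcomp (id2 k) Ivwy) (assoc g h k)) (id2 f)).
Proof.
move=> A2.
have N1 := assoc_nat Iuvw (id2 h) (id2 k); rewrite hcomp_id2 in N1.
have N2 := assoc_nat (id2 f) Ivwy (id2 k).
rewrite -!vcompA (vcompA (assoc f g (comp1 k h))) N1 -!vcompA pentagon.
rewrite (vcompA _ (hcomp (id2 k) (assoc f g h))) -whiskerl_vcomp.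
rewrite (vcompA _ (hcomp (id2 k) (vcomp _ (assoc f g h)))) -whiskerl_vcomp.
rewrite A2 whiskerl_vcomp -vcompA; congr vcomp.
by rewrite whiskerr_vcomp (vcompA (hcomp (assoc g h k) (id2 f)) _ (assoc f Fvy k)) N2 -vcompA.
Qed.

Section PathComposites.
Variables (B : bicategory) (a : nat -> Obj B) (g : forall n, hom (a n) (a n.+1)).

Fixpoint path_comp (u d : nat) {struct d} : hom (a u) (a (d + u).+1) :=
  match d as d0 return hom (a u) (a (d0 + u).+1) with
  | 0 => g u
  | d'.+1 => comp1 (g (d' + u).+1) (path_comp u d')
  end.

Fixpoint path_ext (u d e : nat) {struct e} : hom (a u) (a (e + (d + u).+1).+1) :=
  match e as e0 return hom (a u) (a (e0 + (d + u).+1).+1) with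
  | 0 => comp1 (g (d + u).+1) (path_comp u d)
  | e'.+1 => comp1 (g (e' + (d + u).+1).+1) (path_ext u d e')
  end.

Fixpoint path_assoc (u d e : nat) {struct e} :
  cell (comp1 (path_comp (d + u).+1 e) (path_comp u d)) (path_ext u d e) :=
  match e as e0
    return cell (comp1 (path_comp (d + u).+1 e0) (path_comp u d)) (path_ext u d e0) with
  | 0 => id2 _
  | e'.+1 => vcomp (hcomp (id2 (g (e' + (d + u).+1).+1)) (path_assoc u d e'))
                   (assoc (path_comp u d) (path_comp (d + u).+1 e')
                          (g (e' + (d + u).+1).+1))
  end.

Lemma pack1_g (n n' : nat) : n = n' -> pack1 (g n) = pack1 (g n').
Proof. by move->. Qed.

Lemma pack1_path_comp (u u' d d' : nat) :
  u = u' -> d = d' -> pack1 (path_comp u d) = pack1 (path_comp u' d').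
Proof. by move=> -> ->. Qed.

Lemma path_ext_comp (u d e : nat) :
  pack1 (path_ext u d e) = pack1 (path_comp u (e + d).+1).
Proof.
elim: e => [|e IH] //=.
by apply: pack1_comp1; [apply: pack1_g; lia | exact: IH].
Qed.

Lemma edge_ex (u v : nat) (h : u < v) :
  exists f : hom (a u) (a v), pack1 f = pack1 (path_comp u (v - u.+1)).
Proof. by apply: transport_hom => //; congr a; lia. Qed.

Definition edge (u v : nat) (h : u < v) : hom (a u) (a v) := witness (edge_ex h).

Lemma edgeP (u v : nat) (h : u < v) : pack1 (edge h) = pack1 (path_comp u (v - u.+1)).
Proof. exact: (witnessP (edge_ex h)). Qed.

Lemma edge_succ (u v : nat) (h : u < v) : v = u.+1 -> pack1 (edge h) = pack1 (g u).
Proof. by move=> Ev; rewrite edgeP Ev subnn. Qed.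

Lemma edge_split (u w : nat) (h : u < w.+1) (h1 : w < w.+1) (h2 : u < w) :
  edge h = comp1 (edge h1) (edge h2).
Proof.
apply: pack1_inj; rewrite edgeP.
have -> : w.+1 - u.+1 = (w - u.+1).+1 by lia.
apply: pack1_comp1; last by rewrite edgeP.
by rewrite edge_succ //; apply: pack1_g; lia.
Qed.

Lemma edge_assoc_ex (u v w : nat) (h1 : u < v) (h2 : v < w) (h3 : u < w) :
  exists c : cell (comp1 (edge h2) (edge h1)) (edge h3),
    pack2 c = pack2 (path_assoc u (v - u.+1) (w - v.+1)).
Proof.
apply: transport_cell; last by rewrite path_ext_comp edgeP; apply: pack1_path_comp; lia.
by apply: pack1_comp1; rewrite edgeP //; apply: pack1_path_comp; lia.
Qed.

Definition edge_assoc (u v w : nat) (h1 : u < v) (h2 : v < w) (h3 : u < w) :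
  cell (comp1 (edge h2) (edge h1)) (edge h3) := witness (edge_assoc_ex h1 h2 h3).

Lemma edge_assocP (u v w : nat) (h1 : u < v) (h2 : v < w) (h3 : u < w) :
  pack2 (edge_assoc h1 h2 h3) = pack2 (path_assoc u (v - u.+1) (w - v.+1)).
Proof. exact: (witnessP (edge_assoc_ex h1 h2 h3)). Qed.

Lemma edge_assoc_last (u w : nat) (h1 : u < w) (h2 : w < w.+1) (h3 : u < w.+1) :
  pack2 (edge_assoc h1 h2 h3) = pack2 (id2 (comp1 (edge h2) (edge h1))).
Proof.
rewrite edge_assocP subnn /=; apply: pack2_id2.
apply: pack1_comp1; last by rewrite edgeP.
by rewrite edge_succ //; apply: pack1_g; lia.
Qed.

Lemma edge_assoc_succ (u v w : nat) (h1 : u < v) (h2 : v < w.+1) (h3 : u < w.+1)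
  (h4 : w < w.+1) (h5 : v < w) (h6 : u < w) :
  pack2 (edge_assoc h1 h2 h3) =
  pack2 (vcomp (hcomp (id2 (edge h4)) (edge_assoc h1 h5 h6))
               (assoc (edge h1) (edge h5) (edge h4))).
Proof.
rewrite edge_assocP.
have -> : w.+1 - v.+1 = (w - v.+1).+1 by lia.
rewrite /=; apply: pack2_vcomp.
  apply: pack2_hcomp; last by rewrite edge_assocP.
  by apply: pack2_id2; rewrite edge_succ //; apply: pack1_g; lia.
apply: pack2_assoc; first by rewrite edgeP.
  by rewrite edgeP; apply: pack1_path_comp; lia.
by rewrite edge_succ //; apply: pack1_g; lia.
Qed.

Lemma edge_assoc_invertible (u v w : nat) (h1 : u < v) (h2 : v < w) (h3 : u < w) :
  invertible2 (edge_assoc h1 h2 h3).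
Proof.
elim: w u v h1 h2 h3 => [|w IH] u v h1 h2 h3 //.
case: (ltngtP v w) => [Lv|Lv|Ev]; last 2 first.
- by exfalso; lia.
- subst v; apply: (pack2_invertible (esym (edge_assoc_last h1 h2 h3))).
  exact: id2_invertible.
apply: (pack2_invertible (esym (edge_assoc_succ h1 h2 h3 (ltnSn w) Lv (ltn_trans h1 Lv)))).
apply: vcomp_invertible; last exact: assoc_invertible.
by apply: hcomp_invertible; [exact: id2_invertible | exact: IH].
Qed.

Lemma edge_A2 (y u v w : nat) (huv : u < v) (hvw : v < w) (hwy : w < y)
  (huw : u < w) (hvy : v < y) (huy : u < y) :
  vcomp (edge_assoc huw hwy huy)
    (vcomp (hcomp (id2 (edge hwy)) (edge_assoc huv hvw huw))
           (assoc (edge huv) (edge hvw) (edge hwy)))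
  = vcomp (edge_assoc huv hvy huy) (hcomp (edge_assoc hvw hwy hvy) (id2 (edge huv))).
Proof.
elim: y u v w huv hvw hwy huw hvy huy => [|y IH] u v w huv hvw hwy huw hvy huy //.
apply: pack2_inj; have hy : y < y.+1 := ltnSn y.
case: (ltngtP w y) => [Lw|Lw|Ew]; last 2 first.
- by exfalso; lia.
- subst y.
  set X := vcomp (hcomp _ (edge_assoc huv hvw huw)) _.
  have C : vcomp (id2 _) X = vcomp X (hcomp (id2 (comp1 (edge hwy) (edge hvw))) (id2 (edge huv))).
    by rewrite vcomp_id2l hcomp_id2 vcomp_id2r.
  apply: etrans (etrans _ (pack2_eq C)) _.
    by apply: pack2_vcomp => //; exact: edge_assoc_last.
  apply: pack2_vcomp; first by rewrite (edge_assoc_succ huv hvy huy hwy hvw huw).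
  by apply: pack2_hcomp => //; rewrite (edge_assoc_last hvw hwy hvy).
have hwy' : w < y := Lw; have hvy' : v < y := ltn_trans hvw Lw.
have huy' : u < y := ltn_trans huw Lw.
have C := A2_append (edge hy) (IH u v w huv hvw hwy' huw hvy' huy').
apply: etrans (etrans _ (pack2_eq C)) _.
  apply: pack2_vcomp; first exact: (edge_assoc_succ huw hwy huy hy hwy' huy').
  apply: pack2_vcomp.
    by apply: pack2_hcomp => //; apply: pack2_id2; rewrite (edge_split hwy hy hwy').
  by apply: pack2_assoc => //; rewrite (edge_split hwy hy hwy').
apply: pack2_vcomp; first by rewrite (edge_assoc_succ huv hvy huy hy hvy' huy').
by apply: pack2_hcomp => //; rewrite (edge_assoc_succ hvw hwy hvy hy hwy' hvy').
Qed.

End PathComposites.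

Definition lt01 : (ord0 : 'I_2) < (ord_max : 'I_2) := erefl true.

Lemma ord2_lt (u v : 'I_2) : u < v -> u = ord0 /\ v = ord_max.
Proof. by case: u v => [[|[|u]] hu] [[|[|v]] hv] //= _; split; apply: val_inj. Qed.

Lemma is_nerve_dim1 (B : bicat_data) (m : nat) (y : nerve_raw B 1 m) : is_nerve y.
Proof.
split; last split.
- by move=> u v w h1 h2; case: (no_triple2 h1 h2).
- by move=> u v w h1 h2; case: (no_triple2 h1 h2).
- by move=> u v w y' h1 h2; case: (no_triple2 h1 h2).
Qed.

Lemma segal1_target_segal1 (B : bicat_data) (k m : nat) (x : nerve_raw B k m) :
  segal1_target (segal1 x).
Proof. by split=> // i; split; first exact: is_nerve_dim1. Qed.

Section ComposableChain.
Variables (B : bicategory) (k : nat).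
Variables (A : 'I_k.+1 -> Obj B) (E : 'I_k -> nerve_raw B 1 0).
Hypothesis src_E : forall i, src_obj (E i) = A (zprev i).
Hypothesis tgt_E : forall i, tgt_obj (E i) = A (znext i).

(* Beyond k the chain is padded with identities; only its first k steps are used. *)
Definition chain_ob (n : nat) : Obj B := A (inord (minn n k)).

Lemma chain_obE (u : 'I_k.+1) : chain_ob u = A u.
Proof.
rewrite /chain_ob; have -> : minn u k = u by apply/minn_idPl; rewrite -ltnS.
by rewrite inord_val.
Qed.

Lemma chain_step_ex (n : nat) : exists f : hom (chain_ob n) (chain_ob n.+1),
  forall h : n < k, pack1 f = pack1 (n1 (E (Ordinal h)) lt01 ord0).
Proof.
have [hn|hn] : k <= n \/ n < k by case: leqP; [left | right].
  have -> : chain_ob n.+1 = chain_ob n by rewrite /chain_ob !(minn_idPr _) // leqW.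
  by exists (id1 _) => h; exfalso; lia.
have [f Hf] : exists f : hom (chain_ob n) (chain_ob n.+1),
    pack1 f = pack1 (n1 (E (Ordinal hn)) lt01 ord0).
  apply: transport_hom.
    by apply: (etrans (src_E _)); rewrite -chain_obE.
  by apply: (etrans (tgt_E _)); rewrite -chain_obE.
by exists f => h; rewrite (bool_irrelevance h hn).
Qed.

Definition chain_step (n : nat) : hom (chain_ob n) (chain_ob n.+1) :=
  witness (chain_step_ex n).

Lemma chain_stepP (n : nat) (h : n < k) :
  pack1 (chain_step n) = pack1 (n1 (E (Ordinal h)) lt01 ord0).
Proof. exact: (witnessP (chain_step_ex n)). Qed.

Definition composite_nerve : nerve_raw B k 0 :=
  @NerveRaw B k 0 (fun u => chain_ob u) (fun u v h _ => edge chain_step h)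
    (fun u v h (z : 'I_0) => match z with Ordinal n hn =>
        False_rect _ (notF (hn : n < 0)) end)
    (fun u v w h1 h2 h3 _ => edge_assoc chain_step h1 h2 h3).

Lemma is_nerve_composite : is_nerve composite_nerve.
Proof.
split; last split.
- by move=> *; apply: edge_assoc_invertible.
- by move=> u v w h1 h2 h3; case.
- by move=> *; apply: edge_A2.
Qed.

Lemma segal1_composite : segal1 composite_nerve = Chain A E.
Proof.
congr Chain; first by apply: functional_extensionality => u; exact: chain_obE.
apply: functional_extensionality => i; apply: nerve_raw_eq => /=.
- move=> [[|[|w]] hw] //.
    rewrite (_ : Ordinal hw = ord0); last exact: val_inj.
    by rewrite chain_obE -src_E.
  rewrite (_ : Ordinal hw = ord_max); last exact: val_inj.
  by rewrite chain_obE -tgt_E.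
- move=> u v h z; case: (ord2_lt h) => Eu Ev; subst u v.
  rewrite (ord1 z) edge_succ //; case: i => i hi.
  by rewrite (bool_irrelevance h lt01); exact: chain_stepP.
- by move=> u v h; case.
- by move=> u v w h1 h2; case: (no_triple2 h1 h2).
Qed.

End ComposableChain.

(** * Condition (i): full faithfulness on 1-cells *)

Lemma A1_step (B : bicategory) (a b c d : Obj B)
  (Puv : hom a b) (Pvm : hom b c) (Pmw : hom c d) (Pum : hom a c) (Pvw : hom b d)
  (Puw : hom a d)
  (Quv : hom a b) (Qvm : hom b c) (Qmw : hom c d) (Qum : hom a c) (Qvw : hom b d)
  (Quw : hom a d)
  (PIuvm : cell (comp1 Pvm Puv) Pum) (PIvmw : cell (comp1 Pmw Pvm) Pvw)
  (PIumw : cell (comp1 Pmw Pum) Puw) (PIuvw : cell (comp1 Pvw Puv) Puw)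
  (QIuvm : cell (comp1 Qvm Quv) Qum) (QIvmw : cell (comp1 Qmw Qvm) Qvw)
  (QIumw : cell (comp1 Qmw Qum) Quw) (QIuvw : cell (comp1 Qvw Quv) Quw)
  (PIvmw_inv : cell Pvw (comp1 Pmw Pvm))
  (auv : cell Puv Quv) (avm : cell Pvm Qvm) (amw : cell Pmw Qmw) (aum : cell Pum Qum)
  (avw : cell Pvw Qvw) (auw : cell Puw Quw) :
  vcomp PIumw (vcomp (hcomp (id2 Pmw) PIuvm) (assoc Puv Pvm Pmw))
    = vcomp PIuvw (hcomp PIvmw (id2 Puv)) ->
  vcomp QIumw (vcomp (hcomp (id2 Qmw) QIuvm) (assoc Quv Qvm Qmw))
    = vcomp QIuvw (hcomp QIvmw (id2 Quv)) ->
  vcomp QIuvm (hcomp avm auv) = vcomp aum PIuvm ->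
  avw = vcomp (vcomp QIvmw (hcomp amw avm)) PIvmw_inv ->
  vcomp auw PIumw = vcomp QIumw (hcomp amw aum) ->
  vcomp PIvmw PIvmw_inv = id2 Pvw ->
  vcomp QIuvw (hcomp avw auv) = vcomp auw PIuvw.
Proof.
move=> A2P A2Q A1uvm -> A1umw Hinv.
rewrite -{1}[auv]vcomp_id2r interchange -{1}[auv]vcomp_id2l interchange.
rewrite vcompA vcompA -A2Q -!vcompA.
rewrite (vcompA (hcomp PIvmw_inv (id2 Puv)) (hcomp (hcomp amw avm) auv)).
rewrite (assoc_nat auv avm amw) -!vcompA.
rewrite (vcompA _ (hcomp amw (hcomp avm auv))) -interchange vcomp_id2l A1uvm.
rewrite -{1}[amw]vcomp_id2r interchange -!vcompA.
rewrite (vcompA _ (hcomp amw aum) QIumw) -A1umw -!vcompA.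
rewrite (vcompA (hcomp PIvmw_inv (id2 Puv)) (assoc Puv Pvm Pmw) (hcomp (id2 Pmw) PIuvm)).
rewrite (vcompA (hcomp PIvmw_inv (id2 Puv)) _ PIumw) A2P.
by rewrite -!vcompA -interchange Hinv vcomp_id2l hcomp_id2 vcomp_id2r.
Qed.

(* Given two simplices of NB(k,0) on the same objects and 2-cells between their
   adjacent 1-cells, condition (A1) forces
     alpha_uv = iota'_(u,v-1,v) . (alpha_(v-1,v) * alpha_(u,v-1)) . iota_(u,v-1,v)^-1,
   which defines alpha_uv by recursion on v - u. *)
Section LiftCells.
Variables (B : bicategory) (k : nat) (a : 'I_k.+1 -> Obj B).
Variables (f f' : forall u v : 'I_k.+1, u < v -> hom (a u) (a v)).
Variable io : forall (u v w : 'I_k.+1) (h1 : u < v) (h2 : v < w) (h3 : u < w),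
  cell (comp1 (f h2) (f h1)) (f h3).
Variable io' : forall (u v w : 'I_k.+1) (h1 : u < v) (h2 : v < w) (h3 : u < w),
  cell (comp1 (f' h2) (f' h1)) (f' h3).
Hypothesis io_invertible : forall (u v w : 'I_k.+1) (h1 : u < v) (h2 : v < w) (h3 : u < w),
  invertible2 (io h1 h2 h3).
Hypothesis io'_invertible :
  forall (u v w : 'I_k.+1) (h1 : u < v) (h2 : v < w) (h3 : u < w), invertible2 (io' h1 h2 h3).
Hypothesis io_A2 : forall (u v w y : 'I_k.+1) (huv : u < v) (hvw : v < w) (hwy : w < y)
    (huw : u < w) (hvy : v < y) (huy : u < y),
  vcomp (io huw hwy huy) (vcomp (hcomp (id2 (f hwy)) (io huv hvw huw)) (assoc _ _ _))
  = vcomp (io huv hvy huy) (hcomp (io hvw hwy hvy) (id2 (f huv))).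
Hypothesis io'_A2 : forall (u v w y : 'I_k.+1) (huv : u < v) (hvw : v < w) (hwy : w < y)
    (huw : u < w) (hvy : v < y) (huy : u < y),
  vcomp (io' huw hwy huy) (vcomp (hcomp (id2 (f' hwy)) (io' huv hvw huw)) (assoc _ _ _))
  = vcomp (io' huv hvy huy) (hcomp (io' hvw hwy hvy) (id2 (f' huv))).
Variable base : forall (u v : 'I_k.+1) (h : u < v), nat_of_ord v = u.+1 -> cell (f h) (f' h).

Let io_inv u v w h1 h2 h3 := inv2 (@io_invertible u v w h1 h2 h3).

Lemma mid_lt (v : 'I_k.+1) (u d : nat) : nat_of_ord v = (d + u).+2 -> (d + u).+1 < k.+1.
Proof. by move=> e; have := ltn_ord v; rewrite e; lia. Qed.

Lemma mid_gt (u d : nat) : u < (d + u).+1.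
Proof. by rewrite ltnS leq_addl. Qed.

Lemma mid_lt_last (v : 'I_k.+1) (u d : nat) : nat_of_ord v = (d + u).+2 -> (d + u).+1 < v.
Proof. by move->. Qed.

Fixpoint lift_rec (d : nat) : forall (u v : 'I_k.+1) (h : u < v),
    nat_of_ord v = (d + u).+1 -> cell (f h) (f' h) :=
  match d as d0 return forall (u v : 'I_k.+1) (h : u < v),
      nat_of_ord v = (d0 + u).+1 -> cell (f h) (f' h) with
  | 0 => fun u v h e => base h e
  | d'.+1 => fun u v h e =>
      let w : 'I_k.+1 := Ordinal (@mid_lt v u d' e) in
      let h1 : u < w := mid_gt u d' in
      let h2 : w < v := @mid_lt_last v u d' e in
      vcomp (vcomp (io' h1 h2 h) (hcomp (base h2 e) (@lift_rec d' u w h1 (erefl _))))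
            (io_inv h1 h2 h)
  end.

Lemma lift_rec_irr (d d' : nat) (u v : 'I_k.+1) (h : u < v)
  (e : nat_of_ord v = (d + u).+1) (e' : nat_of_ord v = (d' + u).+1) :
  lift_rec h e = lift_rec h e'.
Proof.
have Ed : d = d' by lia.
by subst d'; rewrite (eq_irrelevance e e').
Qed.

Lemma lift_index (u v : nat) : u < v -> v = ((v - u.+1) + u).+1.
Proof. by lia. Qed.

Definition lift_cell (u v : 'I_k.+1) (h : u < v) : cell (f h) (f' h) :=
  lift_rec h (lift_index h).

Lemma lift_cell_adj (u v : 'I_k.+1) (h : u < v) (e : nat_of_ord v = u.+1) :
  lift_cell h = base h e.
Proof. by rewrite /lift_cell (lift_rec_irr h _ (e : nat_of_ord v = (0 + u).+1)). Qed.

Definition lift_via (u m w : 'I_k.+1) (h1 : u < m) (h2 : m < w) (h3 : u < w) :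
  cell (f h3) (f' h3) :=
  vcomp (vcomp (io' h1 h2 h3) (hcomp (lift_cell h2) (lift_cell h1))) (io_inv h1 h2 h3).

Lemma lift_via_mid (u m m' w : 'I_k.+1) (h1 : u < m) (h2 : m < w) (h1' : u < m')
  (h2' : m' < w) (h3 : u < w) :
  m = m' -> lift_via h1 h2 h3 = lift_via h1' h2' h3.
Proof. by move=> E; subst m'; rewrite (bool_irrelevance h1' h1) (bool_irrelevance h2' h2). Qed.

Lemma lift_cell_unfold (u m w : 'I_k.+1) (h1 : u < m) (h2 : m < w) (h3 : u < w) :
  nat_of_ord w = m.+1 -> lift_cell h3 = lift_via h1 h2 h3.
Proof.
move=> ew.
have e : nat_of_ord w = ((m - u.+1).+1 + u).+1 by rewrite ew; lia.
rewrite /lift_cell (lift_rec_irr h3 _ e) /=.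
set m' := Ordinal _.
rewrite -(lift_cell_adj (@mid_lt_last w u (m - u.+1) e : m' < w) e).
rewrite (lift_rec_irr (mid_gt u (m - u.+1) : u < m') _ (lift_index (mid_gt u (m - u.+1)))).
rewrite -/(lift_cell _) -/(lift_via _ _ h3).
by apply: lift_via_mid; apply: val_inj; rewrite /= -(lift_index h1).
Qed.

Lemma lift_cell_A1_adj (u m w : 'I_k.+1) (h1 : u < m) (h2 : m < w) (h3 : u < w) :
  nat_of_ord w = m.+1 ->
  vcomp (lift_cell h3) (io h1 h2 h3)
  = vcomp (io' h1 h2 h3) (hcomp (lift_cell h2) (lift_cell h1)).
Proof.
by move=> ew; rewrite (lift_cell_unfold h1 h2 h3 ew) -vcompA inv2_cancel_l vcomp_id2r.
Qed.

(* Induction on w: the face (u, v, w) is reduced to (u, v, w-1) through the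
   3-simplex (u, v, w-1, w), using (A2) for both simplices. *)
Lemma lift_cell_A1 (u v w : 'I_k.+1) (h1 : u < v) (h2 : v < w) (h3 : u < w) :
  vcomp (io' h1 h2 h3) (hcomp (lift_cell h2) (lift_cell h1))
  = vcomp (lift_cell h3) (io h1 h2 h3).
Proof.
move Ew : (nat_of_ord w) => n.
elim: n u v w h1 h2 h3 Ew => [|n IH] u v w h1 h2 h3 ew.
  by exfalso; move: h2; rewrite ew.
have hn : n < k.+1 by have := ltn_ord w; rewrite ew; lia.
pose m : 'I_k.+1 := Ordinal hn.
have hmw : m < w by rewrite /= ew.
have ewm : nat_of_ord w = m.+1 by rewrite ew.
case: (ltngtP v n) => [Lv|Lv|Ev].
- have hvm : v < m := Lv.
  have hum : u < m := ltn_trans h1 Lv.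
  exact: (A1_step (io_A2 h1 hvm hmw hum h2 h3) (io'_A2 h1 hvm hmw hum h2 h3)
            (IH u v m h1 hvm hum (erefl _)) (lift_cell_unfold hvm hmw h2 ewm)
            (lift_cell_A1_adj hum hmw h3 ewm) (inv2_cancel_r _)).
- by exfalso; move: h2; rewrite ew; lia.
- have Evm : v = m by apply: val_inj.
  by subst v; symmetry; exact: (lift_cell_A1_adj h1 h2 h3 ewm).
Qed.

Lemma lift_cell_unique (beta : forall (u v : 'I_k.+1) (h : u < v), cell (f h) (f' h)) :
  (forall (u v : 'I_k.+1) (h : u < v) (e : nat_of_ord v = u.+1), beta u v h = base h e) ->
  (forall (u v w : 'I_k.+1) (h1 : u < v) (h2 : v < w) (h3 : u < w),
     vcomp (io' h1 h2 h3) (hcomp (beta _ _ h2) (beta _ _ h1))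
     = vcomp (beta _ _ h3) (io h1 h2 h3)) ->
  forall (u v : 'I_k.+1) (h : u < v), beta u v h = lift_cell h.
Proof.
move=> beta_adj beta_A1 u v h.
move En : (v - u.+1) => n.
elim: n u v h En => [|n IH] u v h en.
  have e : nat_of_ord v = u.+1 by lia.
  by rewrite beta_adj (lift_cell_adj h e).
have hn : v.-1 < k.+1 by have := ltn_ord v; lia.
pose m : 'I_k.+1 := Ordinal hn.
have hum : u < m by rewrite /=; lia.
have hmv : m < v by rewrite /=; lia.
have evm : nat_of_ord v = m.+1 by rewrite /=; lia.
have -> : beta u v h = lift_via hum hmv h.
  rewrite /lift_via (lift_cell_adj hmv evm) -(beta_adj _ _ hmv evm) -(IH u m hum).
    by rewrite beta_A1 -vcompA inv2_cancel_r vcomp_id2r.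
  by rewrite /=; lia.
by rewrite (lift_cell_unfold hum hmv h evm).
Qed.

Definition lift1 (u v : 'I_k.+1) (h : u < v) (z : 'I_2) : hom (a u) (a v) :=
  if nat_of_ord z == 0 then f h else f' h.

Definition lift2 (u v : 'I_k.+1) (h : u < v) (z : 'I_1) :
  cell (lift1 h (zprev z)) (lift1 h (znext z)) :=
  match z as z0 return cell (lift1 h (zprev z0)) (lift1 h (znext z0)) with
  | Ordinal n hn =>
    match n as n0 return forall hn0 : n0 < 1,
        cell (lift1 h (zprev (Ordinal hn0))) (lift1 h (znext (Ordinal hn0))) with
    | 0 => fun _ => lift_cell h
    | n'.+1 => fun hn0 => False_rect _ (notF (hn0 : n'.+1 < 1))
    end hn
  end.

Definition lift3 (u v w : 'I_k.+1) (h1 : u < v) (h2 : v < w) (h3 : u < w) (z : 'I_2) :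
  cell (comp1 (lift1 h2 z) (lift1 h1 z)) (lift1 h3 z) :=
  match z as z0 return cell (comp1 (lift1 h2 z0) (lift1 h1 z0)) (lift1 h3 z0) with
  | Ordinal n hn =>
    match n as n0 return forall hn0 : n0 < 2,
        cell (comp1 (lift1 h2 (Ordinal hn0)) (lift1 h1 (Ordinal hn0)))
             (lift1 h3 (Ordinal hn0)) with
    | 0 => fun _ => io h1 h2 h3
    | n'.+1 => fun _ => io' h1 h2 h3
    end hn
  end.

Definition lift_nerve : nerve_raw B k 1 := NerveRaw lift2 lift3.

Lemma lift2_unique
  (N2 : forall (u v : 'I_k.+1) (h : u < v) (z : 'I_1),
     cell (lift1 h (zprev z)) (lift1 h (znext z))) :
  (forall (u v : 'I_k.+1) (h : u < v) (e : nat_of_ord v = u.+1), N2 u v h ord0 = base h e) ->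
  is_nerve (NerveRaw N2 lift3) -> N2 = lift2.
Proof.
move=> N2_adj [_ [N2_A1 _]].
do 3 apply: functional_extensionality_dep => ?; apply: functional_extensionality_dep.
case=> [[|n] hz] //; rewrite (bool_irrelevance hz (ltn0Sn 0)) /=.
apply: (lift_cell_unique (beta := fun u v h => N2 u v h ord0)) => //.
by move=> u v w h1 h2 h3; exact: (N2_A1 u v w h1 h2 h3 ord0).
Qed.

Lemma is_nerve_lift_nerve : is_nerve lift_nerve.
Proof.
split; last split.
- by move=> u v w h1 h2 h3 [[|[|n]] hz] //=; [exact: io_invertible | exact: io'_invertible].
- by move=> u v w h1 h2 h3 [[|n] hz] //=; exact: lift_cell_A1.
- by move=> u v w y h1 h2 h3 h4 h5 h6 [[|[|n]] hz] //=; [exact: io_A2 | exact: io'_A2].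
Qed.

End LiftCells.

Lemma adj_lt (k : nat) (u v : 'I_k.+1) : nat_of_ord v = u.+1 -> nat_of_ord u < k.
Proof. by move=> e; have := ltn_ord v; rewrite e. Qed.

Lemma adj_zprev (k : nat) (u v : 'I_k.+1) (e : nat_of_ord v = u.+1) :
  u = zprev (Ordinal (adj_lt e)).
Proof. exact: val_inj. Qed.

Lemma adj_znext (k : nat) (u v : 'I_k.+1) (e : nat_of_ord v = u.+1) :
  v = znext (Ordinal (adj_lt e)).
Proof. exact: val_inj. Qed.

Section SegalLift.
Variables (B : bicategory) (k : nat) (A : 'I_k.+1 -> Obj B).
Variables (X1 : forall u v : 'I_k.+1, u < v -> 'I_1 -> hom (A u) (A v))
  (X2 : forall (u v : 'I_k.+1) (h : u < v) (z : 'I_0),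
     cell (X1 h (zprev z)) (X1 h (znext z)))
  (X3 : forall (u v w : 'I_k.+1) (h1 : u < v) (h2 : v < w) (h3 : u < w) (z : 'I_1),
     cell (comp1 (X1 h2 z) (X1 h1 z)) (X1 h3 z)).
Variables (Y1 : forall u v : 'I_k.+1, u < v -> 'I_1 -> hom (A u) (A v))
  (Y2 : forall (u v : 'I_k.+1) (h : u < v) (z : 'I_0),
     cell (Y1 h (zprev z)) (Y1 h (znext z)))
  (Y3 : forall (u v w : 'I_k.+1) (h1 : u < v) (h2 : v < w) (h3 : u < w) (z : 'I_1),
     cell (comp1 (Y1 h2 z) (Y1 h1 z)) (Y1 h3 z)).
Variable E : 'I_k -> nerve_raw B 1 1.

Let x := NerveRaw X2 X3.
Let x' := NerveRaw Y2 Y3.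
Hypotheses (x_nerve : is_nerve x) (x'_nerve : is_nerve x').
Hypothesis sface_E : forall i, sface (E i) = nerve_face i x.
Hypothesis tface_E : forall i, tface (E i) = nerve_face i x'.

Lemma edge_cell_ex (i : 'I_k) (u v : 'I_k.+1) (h : u < v) :
  u = zprev i -> v = znext i ->
  exists c : cell (X1 h ord0) (Y1 h ord0), pack2 c = pack2 (n2 (E i) lt01 ord0).
Proof.
move=> Eu Ev; subst u v; apply: transport_cell.
  rewrite zprev_ord0 (congr1 (fun t => pack1 (n1 t lt01 ord0)) (sface_E i)) /=.
  by rewrite (bool_irrelevance (iota_map_mono i lt01) h).
rewrite znext_ord0 (congr1 (fun t => pack1 (n1 t lt01 ord0)) (tface_E i)) /=.
by rewrite (bool_irrelevance (iota_map_mono i lt01) h).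
Qed.

Definition edge_cell (u v : 'I_k.+1) (h : u < v) (e : nat_of_ord v = u.+1) :
  cell (X1 h ord0) (Y1 h ord0) :=
  witness (edge_cell_ex h (adj_zprev e) (adj_znext e)).

Lemma edge_cellP (i : 'I_k) (u v : 'I_k.+1) (h : u < v) (e : nat_of_ord v = u.+1) :
  u = zprev i -> pack2 (edge_cell h e) = pack2 (n2 (E i) lt01 ord0).
Proof.
move=> Eu; rewrite (witnessP (edge_cell_ex h (adj_zprev e) (adj_znext e))).
by have -> : Ordinal (adj_lt e) = i by apply: val_inj; rewrite /= Eu.
Qed.

Lemma x_invertible (u v w : 'I_k.+1) (h1 : u < v) (h2 : v < w) (h3 : u < w) :
  invertible2 (X3 h1 h2 h3 ord0).
Proof. by case: x_nerve => Hinv _; apply: Hinv. Qed.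

Definition lifted : nerve_raw B k 1 :=
  lift_nerve (f := fun u v h => X1 h ord0) (f' := fun u v h => Y1 h ord0)
    (fun u v w h1 h2 h3 => Y3 h1 h2 h3 ord0) x_invertible edge_cell.

Lemma is_nerve_lifted : is_nerve lifted.
Proof.
case: x_nerve x'_nerve => _ [_ xA2] [x'inv [_ x'A2]].
by apply: is_nerve_lift_nerve => *; [apply: x'inv | apply: xA2 | apply: x'A2].
Qed.

Lemma sface_lifted : sface lifted = x.
Proof.
apply: nerve_raw_eq => //=.
- by move=> u v h z; rewrite (ord1 z).
- by move=> u v h; case.
- by move=> u v w h1 h2 h3 z; rewrite (ord1 z).
Qed.

Lemma tface_lifted : tface lifted = x'.
Proof.
apply: nerve_raw_eq => //=.
- by move=> u v h z; rewrite (ord1 z).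
- by move=> u v h; case.
- by move=> u v w h1 h2 h3 z; rewrite (ord1 z).
Qed.

Lemma segal1_lifted : segal1 lifted = Chain (fun v => A v) E.
Proof.
congr Chain; apply: functional_extensionality => i; apply: nerve_raw_eq => /=.
- by move=> w; rewrite -[nob (E i)]/(nob (sface (E i))) sface_E.
- move=> u v h [[|[|n]] hz] //; case: (ord2_lt h) => Eu Ev; subst u v.
    rewrite (_ : Ordinal hz = ord0); last exact: val_inj.
    by symmetry; exact: (congr1 (fun t => pack1 (n1 t h ord0)) (sface_E i)).
  rewrite (_ : Ordinal hz = ord_max); last exact: val_inj.
  by symmetry; exact: (congr1 (fun t => pack1 (n1 t h ord0)) (tface_E i)).
- move=> u v h [[|n] hz] //=; case: (ord2_lt h) => Eu Ev; subst u v.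
  rewrite (lift_cell_adj _ _ _ _ (erefl : nat_of_ord (znext i) = (zprev i).+1)).
  rewrite (edge_cellP (i := i)) //.
  by rewrite (_ : Ordinal hz = ord0) ?(bool_irrelevance h lt01) //; apply: val_inj.
- by move=> u v w h1 h2; case: (no_triple2 h1 h2).
Qed.

Lemma lifted_unique (x1 : nerve_raw B k 1) :
  is_nerve x1 -> sface x1 = x -> segal1 x1 = Chain (fun v => A v) E -> tface x1 = x' ->
  x1 = lifted.
Proof.
case: x1 => o N1 N2 N3 x1_nerve Hs Hseg Ht.
have Eo : o = A := congr1 nob Hs; subst o.
have EN1 : N1 = lift1 (fun u v h => X1 h ord0) (fun u v h => Y1 h ord0).
  do 3 apply: functional_extensionality_dep => ?; apply: functional_extensionality_dep.
  case=> [[|[|n]] hz] //; apply: pack1_inj.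
    rewrite (_ : Ordinal hz = ord0); last exact: val_inj.
    exact: (congr1 (fun t => pack1 (n1 t _ ord0)) Hs).
  rewrite (_ : Ordinal hz = ord_max); last exact: val_inj.
  exact: (congr1 (fun t => pack1 (n1 t _ ord0)) Ht).
subst N1.
have EN3 : N3 = lift3 (fun u v w h1 h2 h3 => X3 h1 h2 h3 ord0)
                      (fun u v w h1 h2 h3 => Y3 h1 h2 h3 ord0).
  do 6 apply: functional_extensionality_dep => ?; apply: functional_extensionality_dep.
  case=> [[|[|n]] hz] //; apply: pack2_inj.
    rewrite (_ : Ordinal hz = ord0); last exact: val_inj.
    exact: (congr1 (fun t => pack2 (n3 t _ _ _ ord0)) Hs).
  rewrite (_ : Ordinal hz = ord_max); last exact: val_inj.
  exact: (congr1 (fun t => pack2 (n3 t _ _ _ ord0)) Ht).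
subst N3.
rewrite /lifted /lift_nerve; congr NerveRaw.
apply: lift2_unique; last exact: x1_nerve.
move=> u v h e.
apply: pack2_inj; rewrite (edge_cellP (i := Ordinal (adj_lt e))) -?adj_zprev //.
have := congr1 (fun t => pack2 (n2 t lt01 ord0)) (congr1 (cedge^~ (Ordinal (adj_lt e))) Hseg).
rewrite /= => <-.
have move_ends (u' v' : 'I_k.+1) (h' : u' < v') : u = u' -> v = v' ->
    pack2 (N2 u v h ord0) = pack2 (N2 u' v' h' ord0).
  by move=> Eu Ev; subst u' v'; rewrite (bool_irrelevance h' h).
exact: move_ends (adj_zprev e) (adj_znext e).
Qed.

End SegalLift.

Lemma segal1_fully_faithful (B : bicategory) (k : nat) (x x' : nerve_raw B k 0)
  (y : chain (Obj B) (nerve_raw B 1 1) k) :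
  is_nerve x -> is_nerve x' ->
  segal1 x = chain_map (@sface B 1) y -> segal1 x' = chain_map (@tface B 1) y ->
  exists! x1, is_nerve x1 /\ sface x1 = x /\ segal1 x1 = y /\ tface x1 = x'.
Proof.
case: y => V E; case: x => A X1 X2 X3; case: x' => A' Y1 Y2 Y3 Hx Hx' Hs Ht.
have EV := congr1 cvert Hs; simpl in EV; subst V.
have EA : A' = A.
  by apply: functional_extensionality => u; exact: (congr1 (cvert^~ u) Ht).
subst A'.
have sface_E i := esym (congr1 (cedge^~ i) Hs).
have tface_E i := esym (congr1 (cedge^~ i) Ht).
exists (lifted Hx sface_E tface_E); split.
  split; first exact: is_nerve_lifted.
  by rewrite sface_lifted segal1_lifted tface_lifted.
by move=> x1 [? [? [? ?]]]; symmetry; apply: lifted_unique.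
Qed.

Theorem mainTheorem17 (B : bicategory) :
  (forall k : nat, segal_cond_i B k) /\ (forall j k : nat, segal_cond_ii B j k).
Proof.
split=> [k|j k]; last exact: segal_cond_ii_holds.
split; [|split; [|split]].
- by move=> x _; exact: segal1_target_segal1.
- by move=> x _; exact: segal1_target_segal1.
- move=> [A E] [_ HE].
  have src_E i : src_obj (E i) = A (zprev i) by case: (HE i) => _ [].
  have tgt_E i : tgt_obj (E i) = A (znext i) by case: (HE i) => _ [].
  exists (composite_nerve src_E tgt_E); first exact: is_nerve_composite.
  exact: segal1_composite.
- by move=> x x' y Hx Hx' _ Hs Ht; exact: segal1_fully_faithful.
Qed.
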